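(* Let $M_G$ be a mixed graph, let $W\subset V(M_G)$ be non-empty, let $U=V(M_G)\setminus W$, and suppose $M_G$ contains no arc $\overrightarrow{uw}$ with $u\in U$ and $w\in W$. Let $M_{G'}$ be obtained from $M_G$ by replacing every arc $\overrightarrow{wu}$ ($w\in W$, $u\in U$) with the undirected edge $\{w,u\}$ and every undirected edge $\{u,w\}$ ($u\in U$, $w\in W$) with the arc $\overrightarrow{uw}$ (all other edges unchanged). Then $M_{G'}$ and $M_G$ are cospectral.
   Context: A mixed graph $M_G$ is obtained from a finite simple graph $G$ by orienting the edges of some subset of $E(G)$; oriented edges are arcs $\overrightarrow{uv}$, the others are undirected edges $\{u,v\}$. With $\omega=\frac{1+\mathbf{i}\sqrt3}{2}$, the matrix $N(M_G)$ has $(u,v)$-entry $\omega$ if $\overrightarrow{uv}$ is an arc, $\bar\omega$ if $\overrightarrow{vu}$ is an arc, $1$ if $\{u,v\}$ is an undirected edge, $0$ otherwise. Two mixed graphs are cospectral if their matrices $N$ have the same multiset of eigenvalues. *)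

From HB Require Import structures.
From mathcomp Require Import all_boot all_order all_algebra all_field.
Set Implicit Arguments. Unset Strict Implicit. Unset Printing Implicit Defensive.
Import Order.TTheory GRing.Theory Num.Theory.
Local Open Scope ring_scope.

(* A mixed graph on vertex set 'I_n: the underlying simple graph is [adj]
   (symmetric, irreflexive); [arc u v] means the edge {u,v} is oriented as
   the arc u -> v.  Edges of [adj] with neither orientation are undirected. *)
Definition mixed_graph (n : nat) (adj arc : rel 'I_n) : Prop :=
  [/\ forall u v, adj u v = adj v u,
      forall u, ~~ adj u u,
      forall u v, arc u v -> adj u v
    & forall u v, arc u v -> ~~ arc v u].

Definition undirected_edge (n : nat) (adj arc : rel 'I_n) (u v : 'I_n) : bool :=
  [&& adj u v, ~~ arc u v & ~~ arc v u].

Definition omega : algC := (1 + 'i * sqrtC 3) / 2.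

Definition Nmat (n : nat) (adj arc : rel 'I_n) : 'M[algC]_n :=
  \matrix_(u, v)
    (if arc u v then omega
     else if arc v u then omega^*
     else if adj u v then 1 else 0).

(* Multiset of eigenvalues: the multiplicity of each eigenvalue as a root of
   the characteristic polynomial. *)
Definition cospectral (n : nat) (A B : 'M[algC]_n) : Prop :=
  forall z : algC, mup z (char_poly A) = mup z (char_poly B).

Definition switch_arcs (n : nat) (W : {set 'I_n}) (adj arc : rel 'I_n) : rel 'I_n :=
  fun x y =>
    if (x \notin W) && (y \in W) then undirected_edge adj arc x y
    else if (x \in W) && (y \notin W) then false
    else arc x y.

From HB Require Import structures.
From mathcomp Require Import all_boot all_order all_algebra all_field.
From mathcomp Require Import ring.
Set Implicit Arguments. Unset Strict Implicit. Unset Printing Implicit Defensive.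
Import Order.TTheory GRing.Theory Num.Theory.
Local Open Scope ring_scope.

(* Let D be diagonal with entry omega^* on W and 1 on U.  Switching leaves the
   entries of N(M_G) inside W and inside U unchanged, and, since there is no
   arc from U to W and omega * omega^* = 1, it multiplies the W-to-U entries
   by omega^* and the U-to-W entries by omega.  Hence N(M_G') D = D N(M_G),
   so the two matrices are similar. *)

Lemma conj_omega : omega^* = (1 - 'i * sqrtC 3) / 2.
Proof.
have sqrt3_real : (sqrtC 3 : algC)^* = sqrtC 3.
  by apply/CrealP/ger0_real; rewrite sqrtC_ge0 ler0n.
rewrite /omega fmorph_div /= rmorphD /= rmorphM /= rmorph1 conjCi sqrt3_real.
by rewrite rmorph_nat mulNr.
Qed.

Lemma omega_mul_conj : omega * omega^* = 1.
Proof.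
have i_sqrt3_sq : ('i * sqrtC 3) ^+ 2 = - 3 :> algC.
  by rewrite exprMn sqrCi sqrtCK mulN1r.
rewrite conj_omega /omega.
have -> : (1 + 'i * sqrtC 3) / 2 * ((1 - 'i * sqrtC 3) / 2)
          = (1 - ('i * sqrtC 3) ^+ 2) / 4 :> algC.
  by field.
by rewrite i_sqrt3_sq opprK (_ : 1 + 3 = 4) // divff // pnatr_eq0.
Qed.

Lemma omega_conj_neq0 : omega^* != 0.
Proof.
by apply: contra_eq_neq omega_mul_conj => ->; rewrite mulr0 eq_sym oner_neq0.
Qed.

Lemma char_poly_similar (R : idomainType) (n : nat) (P A B : 'M[R]_n) :
  \det P != 0 -> A *m P = P *m B -> char_poly A = char_poly B.
Proof.
move=> detP0 AP_PB; pose Q := map_mx (@polyC R) P.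
have detQ0 : \det Q != 0 by rewrite det_map_mx polyC_eq0.
have xAQ_QxB : char_poly_mx A *m Q = Q *m char_poly_mx B.
  by rewrite /char_poly_mx mulmxBl mulmxBr -!map_mxM AP_PB scalar_mxC.
by apply: (mulIf detQ0); rewrite -!det_mulmx xAQ_QxB !det_mulmx mulrC.
Qed.

Definition switch_weight (n : nat) (W : {set 'I_n}) (i : 'I_n) : algC :=
  if i \in W then omega^* else 1.

Section Switching.

Variables (n : nat) (adj arc : rel 'I_n) (W : {set 'I_n}).
Hypothesis G : mixed_graph adj arc.
Hypothesis no_arc_into_W : forall u w, u \notin W -> w \in W -> ~~ arc u w.

Let N := Nmat adj arc.
Let Nsw := Nmat adj (switch_arcs W adj arc).

Lemma Nmat_switch_same_side i j : (i \in W) = (j \in W) -> Nsw i j = N i j.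
Proof. by move=> ij_same; rewrite !mxE /switch_arcs ij_same; case: (j \in W). Qed.

Lemma Nmat_switch_from_W i j : i \in W -> j \notin W -> Nsw i j = omega^* * N i j.
Proof.
move=> iW jU; have [adjC _ arc_adj _] := G.
rewrite !mxE /switch_arcs /undirected_edge iW jU /=.
rewrite (negbTE (no_arc_into_W jU iW)) adjC.
case: (boolP (arc i j)) => [/arc_adj -> | _]; first by rewrite andbF mulrC omega_mul_conj.
by rewrite andbT; case: (adj i j); rewrite ?mulr1 ?mulr0.
Qed.

Lemma Nmat_switch_into_W i j : i \notin W -> j \in W -> Nsw i j = omega * N i j.
Proof.
move=> iU jW; have [adjC _ arc_adj _] := G.
rewrite !mxE /switch_arcs /undirected_edge iU jW /=.
rewrite (negbTE (no_arc_into_W iU jW)).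
case: (boolP (arc j i)) => [/arc_adj | _].
  by rewrite adjC andbF => ->; rewrite omega_mul_conj.
by rewrite andbT; case: (adj i j); rewrite ?mulr1 ?mulr0.
Qed.

Lemma Nmat_switch_weight :
  Nsw *m diag_mx (\row_i switch_weight W i)
  = diag_mx (\row_i switch_weight W i) *m N.
Proof.
apply/matrixP=> i j; rewrite mul_mx_diag mul_diag_mx mxE [RHS]mxE.
(* Evaluate only the 1 x n weight row; a plain !mxE would also unfold Nsw. *)
rewrite !(@mxE _ 1) /switch_weight.
case: (boolP (i \in W)) => iW; case: (boolP (j \in W)) => jW.
- by rewrite Nmat_switch_same_side ?iW ?jW // mulrC.
- by rewrite Nmat_switch_from_W // mulr1.
- by rewrite Nmat_switch_into_W // mulrAC omega_mul_conj mul1r.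
- by rewrite Nmat_switch_same_side ?(negbTE iW) ?(negbTE jW) // mulrC.
Qed.

End Switching.

Theorem theorem4p1 (n : nat) (adj arc : rel 'I_n) (W : {set 'I_n}) :
  mixed_graph adj arc ->
  W != set0 ->
  (forall u w : 'I_n, u \notin W -> w \in W -> ~~ arc u w) ->
  cospectral (Nmat adj (switch_arcs W adj arc)) (Nmat adj arc).
Proof.
move=> G _ no_arc_into_W z.
(* W = set0 is harmless: the switch is then the identity. *)
congr (mup z _).
apply: (char_poly_similar _ (Nmat_switch_weight G no_arc_into_W)).
rewrite det_diag; apply/prodf_neq0 => i _; rewrite mxE /switch_weight.
by case: (i \in W); rewrite ?omega_conj_neq0 ?oner_eq0.
Qed.
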